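(* A planar structure's degrees of statical (and thus kinematical) in- or over-determinacy is invariant both under projective planar transformations and dualities.
   Context: Planar structures are considered in two settings. In the planar system, bodies in the $x,y$ plane are subjected to coplanar forces, represented as $f=(-F_y,F_x,M_z)\in\mathcal{F}_p$ (projective homogeneous coordinates of the line of action in the real projective plane $PG(2)$), and move in the plane with velocities $e=(-v_y,v_x,\omega_z)\in\mathcal{E}_c$ (homogeneous coordinates of the instantaneous centre of rotation). In the complementary planar system, bodies in the $x,y$ plane are subjected to forces orthogonal to the plane, $f=(-M_y,M_x,F_z)\in\mathcal{F}_c$ (homogeneous coordinates of the point of attack), and move with velocities $e=(-\omega_y,\omega_x,v_z)\in\mathcal{E}_p$ (homogeneous coordinates of the axis of rotation). A projective transformation (resp. duality) of a statics/kinematics problem transforms all points and lines of the structure and of the forces/velocities according to a projective transformation (resp. duality) of $PG(2)$, such that the image is in static equilibrium / compatible iff the original is. It has been established that: invertible linear maps $\mathcal{F}_p\to\mathcal{F}_p$, $\mathcal{F}_c\to\mathcal{F}_c$, $\mathcal{F}_p\leftrightarrow\mathcal{F}_c$ (forces $f_i\mapsto f_iA$) preserve static equilibrium, and invertible linear maps $\mathcal{E}_p\to\mathcal{E}_p$, $\mathcal{E}_c\to\mathcal{E}_c$, $\mathcal{E}_p\leftrightarrow\mathcal{E}_c$ preserve compatibility; every projective transformation (for maps within the same space) or duality (for maps between the $p$ and $c$ spaces) of a statics/kinematics problem is the composition of a scaling-equivalence class of such an invertible linear map with an equilibrium- (resp. compatibility-) preserving congruence (a nonzero rescaling $f_i\mapsto\psi_i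 f_i$ of the individual forces/velocities, which leaves their lines/points of attack unchanged), and every such composition gives one. Statical and kinematical degrees of indeterminacy are linked: to each kinematical degree of indeterminacy corresponds a degree of static overdeterminacy and vice versa. *)

From HB Require Import structures.
From mathcomp Require Import all_boot all_order all_algebra.
Set Implicit Arguments. Unset Strict Implicit. Unset Printing Implicit Defensive.
Import Order.TTheory GRing.Theory Num.Theory.
Local Open Scope ring_scope.

(* A planar structure: nb free bodies (the ground/fixed support is [None]),
   nj joints (interactions).  Joint j connects body [jtail j] and body
   [jhead j]; its (internal) force f_j, a vector of homogeneous force
   coordinates in R^3 (f in F_p or F_c), acts as +f_j on [jtail j] and as
   -f_j on [jhead j] (action = reaction).  The forces the joint can
   transmit form the linear subspace (projective subspace of PG(2)) given
   by the row space of [jforces j] (e.g. a pencil of lines through a hinge,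
   a single line of action for a bar, everything for a rigid connection). *)
Record structure (R : fieldType) (nb nj : nat) := Structure {
  jtail : 'I_nj -> option 'I_nb;
  jhead : 'I_nj -> option 'I_nb;
  jforces : 'I_nj -> 'M[R]_3 }.

Section Degrees.
Variables (R : fieldType) (nb nj : nat) (s : structure R nb nj).

Definition incidence : 'M[R]_(nb, nj) :=
  \matrix_(k, j) ((jtail s j == Some k)%:R - (jhead s j == Some k)%:R).

(* internal force states are F : 'M_(nj,3) (row j = f_j), vectorized by mxvec *)
Definition joint_space (j : 'I_nj) : 'M[R]_(3, nj * 3) :=
  jforces s j *m
    lin1_mx (fun x : 'rV[R]_3 => mxvec (delta_mx j 0 *m x : 'M[R]_(nj, 3))).

Definition admissible : 'M[R]_(nj * 3) := (\sum_j <<joint_space j>>)%MS.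

Definition equil_map : 'M[R]_(nj * 3, nb * 3) :=
  lin_mx (mulmx incidence : 'M[R]_(nj, 3) -> 'M[R]_(nb, 3)).

(* degree of statical indeterminacy: dimension of the space of admissible
   internal force states in equilibrium under zero external load
   (self-stresses) *)
Definition static_indet : nat := \rank (admissible :&: kermx equil_map)%MS.

(* degree of statical overdeterminacy: codimension, in the space of external
   loads (one force per free body), of the loads that can be equilibrated *)
Definition static_overdet : nat := (nb * 3 - \rank (admissible *m equil_map))%N.

(* kinematics: velocities E : 'M_(nb,3) (row k = e_k, ground at rest);
   compatibility: the relative velocity at each joint does no work against
   any admissible joint force *)
Definition compat_map (E : 'M[R]_(nb, 3)) : 'M[R]_(nj, 3) :=
  \matrix_(j < nj) (row j (incidence^T *m E) *m (jforces s j)^T).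

Definition kin_indet : nat := \rank (kermx (lin_mx compat_map)).

End Degrees.

(* Image of the statics problem under the invertible linear map A of force
   coordinates (projective transformation F_p->F_p, F_c->F_c, or duality
   F_p<->F_c) composed with the congruence rescaling the force of joint j
   by the nonzero factor psi j: f_j |-> psi j * f_j A. *)
Definition transform (R : fieldType) (nb nj : nat) (s : structure R nb nj)
  (A : 'M[R]_3) (psi : 'I_nj -> R) : structure R nb nj :=
  Structure (jtail s) (jhead s) (fun j => (psi j *: jforces s j) *m A).

From HB Require Import structures.
From mathcomp Require Import all_boot all_order all_algebra.
Import Order.TTheory GRing.Theory Num.Theory.
Set Implicit Arguments. Unset Strict Implicit. Unset Printing Implicit Defensive.
Local Open Scope ring_scope.

(* The transformed joint-force spaces are the rows of the original ones times
   A (the factors psi_j do not change row spaces), so F |-> F A maps the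
   admissible internal force states of the original structure isomorphically
   onto those of the image; since F |-> F A commutes with the equilibrium map
   F |-> C F (C the incidence matrix), it also maps self-stresses to
   self-stresses and equilibrated loads to equilibrated loads.  Dually, the
   compatibility map of the image is the original one precomposed with
   E |-> E A^T and followed by the row scaling diag(psi), both invertible, so
   its kernel has the same dimension. *)

Section LinearMatrices.
Variable R : fieldType.

Lemma lin_mx_comp m1 n1 m2 n2 m3 n3
    (f : {linear 'M[R]_(m1, n1) -> 'M[R]_(m2, n2)})
    (g : {linear 'M[R]_(m2, n2) -> 'M[R]_(m3, n3)}) :
  lin_mx (g \o f) = lin_mx f *m lin_mx g.
Proof.
apply/row_matrixP => i.
by rewrite row_mul !rowE !mul_rV_lin /= mxvecK.
Qed.

Lemma lin_mx_unitmx m n (f g : {linear 'M[R]_(m, n) -> 'M[R]_(m, n)}) :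
  cancel f g -> lin_mx f \in unitmx.
Proof.
move=> fK; suff /mulmx1_unit[] : lin_mx f *m lin_mx g = 1%:M by [].
apply/row_matrixP => i.
by rewrite row_mul rowE !mul_rV_lin /= mxvecK fK vec_mxK row1.
Qed.

Lemma lin_mulmxr_unitmx m n (A : 'M[R]_n) :
  A \in unitmx -> (lin_mulmxr A : 'M_(m * n)) \in unitmx.
Proof.
move=> uA; apply: (@lin_mx_unitmx _ _ _ (mulmxr (invmx A))) => X /=.
by rewrite mulmxK.
Qed.

Lemma lin_mulmx_unitmx m n (D : 'M[R]_m) :
  D \in unitmx -> (lin_mulmx D : 'M_(m * n)) \in unitmx.
Proof.
move=> uD; apply: (@lin_mx_unitmx _ _ _ (mulmx (invmx D))) => X /=.
by rewrite mulKmx.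
Qed.

Lemma mxrankMr_unit m n (A : 'M[R]_(m, n)) (U : 'M[R]_n) :
  U \in unitmx -> \rank (A *m U) = \rank A.
Proof. by rewrite -row_free_unit; apply: mxrankMfree. Qed.

Lemma mxrankMl_unit m n (U : 'M[R]_m) (A : 'M[R]_(m, n)) :
  U \in unitmx -> \rank (U *m A) = \rank A.
Proof. by rewrite -row_full_unit => /eqmxMfull ->. Qed.

Lemma capmxM_unit m1 m2 n (A : 'M[R]_(m1, n)) (B : 'M[R]_(m2, n)) (U : 'M[R]_n) :
  U \in unitmx -> ((A :&: B) *m U :=: A *m U :&: B *m U)%MS.
Proof.
move=> uU; apply/eqmxP; rewrite capmxMr /=.
have freeV : row_free (invmx U) by rewrite row_free_unit unitmx_inv.
rewrite -(submxMfree _ _ freeV) mulmxK //.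
by apply: submx_trans (capmxMr _ _ _) _; rewrite !mulmxK.
Qed.

Lemma kermx_mulmx_stable m n (E : 'M[R]_(m, n)) (U : 'M[R]_m) (V : 'M[R]_n) :
  U \in unitmx -> U *m E = E *m V -> (kermx E *m U :=: kermx E)%MS.
Proof.
move=> uU UE.
have sKU : (kermx E *m U <= kermx E)%MS.
  by rewrite sub_kermx -mulmxA UE mulmxA mulmx_ker mul0mx.
by apply/eqmxP; rewrite -(mxrank_leqif_eq sKU).2 mxrankMr_unit.
Qed.

Lemma lin_mulmxr_lin_mulmxC m n p q (B : 'M[R]_(m, n)) (A : 'M[R]_(p, q)) :
  lin_mulmxr A *m lin_mulmx B = lin_mulmx B *m lin_mulmxr A.
Proof.
by apply/row_matrixP => i; rewrite !rowE !mulmxA !mul_rV_lin /= !mxvecK mulmxA.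
Qed.

Lemma lin1_mxvec_mulmxr m n p (B : 'M[R]_(m, 1)) (A : 'M[R]_(n, p)) :
  A *m lin1_mx (mxvec \o mulmx B) = lin1_mx (mxvec \o mulmx B) *m lin_mulmxr A.
Proof.
apply/row_matrixP => i.
by rewrite !row_mul !rowE !mul_rV_lin1 /= mxvecK mulmxA.
Qed.

Lemma diag_mx_unitmx n (d : 'rV[R]_n) :
  (forall i, d 0 i != 0) -> diag_mx d \in unitmx.
Proof. by move=> d_nz; rewrite unitmxE det_diag unitfE; apply/prodf_neq0. Qed.

End LinearMatrices.

Section CompatMapLinear.
Variables (R : fieldType) (nb nj : nat) (s : structure R nb nj).

Fact compat_map_is_semilinear : semilinear (compat_map s).
Proof.
split=> [a E|E1 E2]; apply/row_matrixP => j; rewrite ?linearZ ?linearD /= !rowK.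
  by rewrite !row_mul -scalemxAr -scalemxAl.
by rewrite !row_mul mulmxDr mulmxDl.
Qed.

HB.instance Definition _ :=
  GRing.isSemilinear.Build R 'M[R]_(nb, 3) 'M[R]_(nj, 3) _ (compat_map s)
    compat_map_is_semilinear.

End CompatMapLinear.

Section ProjectiveTransform.
Variables (R : fieldType) (nb nj : nat) (s : structure R nb nj).
Variables (A : 'M[R]_3) (psi : 'I_nj -> R).
Hypotheses (unitA : A \in unitmx) (psi_neq0 : forall j, psi j != 0).

Local Notation s' := (transform s A psi).

Lemma joint_space_transform j :
  joint_space s' j = psi j *: (joint_space s j *m lin_mulmxr A).
Proof.
rewrite /joint_space /= -!scalemxAl -!mulmxA.
by rewrite (lin1_mxvec_mulmxr (delta_mx j 0)).
Qed.

Lemma admissible_transform : (admissible s' :=: admissible s *m lin_mulmxr A)%MS.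
Proof.
apply: eqmx_sym; apply: eqmx_trans (sumsmxMr_gen _ _ _) _.
apply: eqmx_sums => j _; rewrite joint_space_transform.
apply/eqmxP; rewrite !genmxE; apply/eqmxP.
exact: eqmx_trans (eqmxMr _ (genmxE _)) (eqmx_sym (eqmx_scale _ (psi_neq0 j))).
Qed.

Lemma kermx_equil_map_mulmxr :
  (kermx (equil_map s) *m lin_mulmxr A :=: kermx (equil_map s))%MS.
Proof.
exact: kermx_mulmx_stable (lin_mulmxr_unitmx _ unitA) (lin_mulmxr_lin_mulmxC _ _).
Qed.

Lemma static_indet_transform : static_indet s' = static_indet s.
Proof.
rewrite /static_indet.
rewrite (cap_eqmx admissible_transform (eqmx_sym kermx_equil_map_mulmxr)).
rewrite -(capmxM_unit _ _ (lin_mulmxr_unitmx _ unitA)).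
by rewrite mxrankMr_unit ?lin_mulmxr_unitmx.
Qed.

Lemma static_overdet_transform : static_overdet s' = static_overdet s.
Proof.
rewrite /static_overdet (eqmxMr _ admissible_transform).
by rewrite -mulmxA lin_mulmxr_lin_mulmxC mulmxA mxrankMr_unit ?lin_mulmxr_unitmx.
Qed.

Local Notation D := (diag_mx (\row_j psi j)).

Lemma compat_map_transform E :
  compat_map s' E = D *m compat_map s (E *m A^T).
Proof.
apply/row_matrixP => j; rewrite row_mul row_diag_mx -scalemxAl -rowE !rowK /=.
by rewrite mxE trmx_mul linearZ /= -!scalemxAr !mulmxA !row_mul.
Qed.

Lemma lin_compat_map_transform :
  lin_mx (compat_map s') = lin_mulmxr A^T *m lin_mx (compat_map s) *m lin_mulmx D.
Proof.
rewrite /lin_mulmxr /lin_mulmx -!lin_mx_comp.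
by apply/matrixP => i k; rewrite !mxE /= compat_map_transform.
Qed.

Lemma kin_indet_transform : kin_indet s' = kin_indet s.
Proof.
have unitD : D \in unitmx by apply: diag_mx_unitmx => j; rewrite mxE.
rewrite /kin_indet !mxrank_ker lin_compat_map_transform.
rewrite mxrankMr_unit ?lin_mulmx_unitmx //.
by rewrite mxrankMl_unit ?lin_mulmxr_unitmx ?unitmx_tr.
Qed.

End ProjectiveTransform.

Theorem corollary1 (R : realFieldType) (nb nj : nat) (s : structure R nb nj)
    (A : 'M[R]_3) (psi : 'I_nj -> R) :
  A \in unitmx -> (forall j, psi j != 0) ->
  [/\ static_indet (transform s A psi) = static_indet s,
      static_overdet (transform s A psi) = static_overdet s
    & kin_indet (transform s A psi) = kin_indet s].
Proof.
move=> unitA psi_neq0; split.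
- exact: static_indet_transform.
- exact: static_overdet_transform.
- exact: kin_indet_transform.
Qed.
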